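(* Consider CAV $i$ and CAV $i-1$ on different roads, in the safe-merging setting of the context, under (A1), (SA) and (A4). Assume $v_i\ge0$ at all times and $u_{\min}\le0$. Suppose that at each sampling time $t$ the control applied on $[t,t+\Delta t)$ is a feasible point of QP$_2(t)$ whenever QP$_2(t)$ is feasible. Then QP$_2(t_i^0+k\Delta t)$ is feasible for every integer $k\ge0$ with $[t_i^0+k\Delta t,\,t_i^0+(k+1)\Delta t]\subset[t_i^0,t_i^m]$.
   Context: **Vehicle model and times.** The vehicle dynamics are $\dot x_i=v_i$ and $\dot v_i=u_i$, where $x_i\in[0,L]$ is the distance travelled by CAV $i$ from the origin of its road, $v_i$ its speed and $u_i$ its acceleration (the control). The merging point is at position $L>0$ on each road. CAV $i$ enters at time $t_i^0$ and reaches the merging point at time $t_i^m$. CAV $i-1$ is the CAV immediately ahead of $i$ in the first-in-first-out crossing order, on the other road, with position $x_{i-1}$, speed $v_{i-1}$ and acceleration $u_{i-1}$, all known to CAV $i$. Let $z_{i,i-1}=x_{i-1}-x_i$, let $\varphi>0$, $\delta$ and $k_2>0$ be constants, and let $\varphi_2=\varphi/L$. **Control bounds.** Control bounds are $u_{\min}\le u_i\le u_{i,\max}$ with $u_{\min}<0<u_{i,\max}$. **(A1) Common minimum acceleration.** All CAVs share the same minimum acceleration $u_{\min}$. In particular $u_{i-1}(t)\ge u_{\min}$ for all $t$. **Functions of time:** - Merging safety function: $b_2=z_{i,i-1}-\varphi_2x_iv_i-\delta$. - CBF constraint: $b_{\mathrm{cbf}_2}(u_i)=v_{i-1}-v_i-\varphi_2v_i^2-\varphi_2x_iu_i+k_2b_2\ge0$.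 - Feasibility function: $b_F=v_{i-1}-v_i-\varphi_2v_i^2+k_2b_2-\varphi_2x_iu_{\min}$. - Auxiliary function: $b_{\eta_2}=v_{i-1}-v_i-\varphi_2v_i^2-\varphi_2x_iu_{\min}$. - Feasibility constraint: $\eta_2(u_i)=u_{i-1}-u_i-2\varphi_2v_iu_i-\varphi_2v_iu_{\min}+k_2 b_{\eta_2}\ge0$. Note that $\eta_2=\dot b_{\eta_2}+k_2b_{\eta_2}$ and $\dot b_F+k_2b_F=\eta_2+k_2b_{\mathrm{cbf}_2}$. **QP$_2(t)$.** QP$_2(t)$ is the quadratic program in the variables $(u_i,e_i)$ that minimizes $\beta e_i^2+\tfrac12(u_i-u_{\mathrm{ref}}(t))^2$ subject to: - $b_{\mathrm{cbf}_2}(u_i)\ge0$, - $u_{\min}\le u_i\le u_{i,\max}$, - $\eta_2(u_i)\ge0$, - a control Lyapunov constraint $c_1(t)+c_2(t)u_i\le e_i$ with a free slack variable $e_i$. All quantities are evaluated at time $t$. ''Feasible'' means the constraint set is nonempty. **(SA) Sampling / forward invariance.** The control is held constant on each $[t,t+\Delta t)$, and $\Delta t$ is small enough that for each $b\in\{b_2,b_F,b_{\eta_2}\}$: if $b(t)\ge0$ and $\dot b(t)+k_2b(t)\ge0$ under the applied controls, then $b(t+\Delta t)\ge0$. **(A4) Initial conditions.** $b_2(t_i^0)\ge0$, $b_F(t_i^0)\ge0$ and $b_{\eta_2}(t_i^0)\ge0$, where $b_F$ is the merging feasibility function above. *)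

From Stdlib Require Import Reals.
From Coquelicot Require Import Coquelicot.
Open Scope R_scope.

(** Controls are piecewise constant (held on [t, t+dt)), so the time
    derivatives of the speeds (and of the b-functions) at sampling times
    are right derivatives. *)
Definition right_deriv (f : R -> R) (t d : R) : Prop :=
  filterlim (fun h => (f (t + h) - f t) / h) (at_right 0) (locally d).

(** Notation of the paper: xi, vi (CAV i), xp, vp, up (CAV i-1),
    phi2 = phi / L. *)

Definition b2 (phi2 delta xi vi xp : R) : R :=
  (xp - xi) - phi2 * xi * vi - delta.

Definition bcbf2 (phi2 delta k2 xi vi xp vp ui : R) : R :=
  vp - vi - phi2 * vi ^ 2 - phi2 * xi * ui + k2 * b2 phi2 delta xi vi xp.

Definition bF (phi2 delta k2 umin xi vi xp vp : R) : R :=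
  vp - vi - phi2 * vi ^ 2 + k2 * b2 phi2 delta xi vi xp - phi2 * xi * umin.

Definition beta2 (phi2 umin xi vi vp : R) : R :=
  vp - vi - phi2 * vi ^ 2 - phi2 * xi * umin.

Definition eta2 (phi2 k2 umin xi vi vp up ui : R) : R :=
  up - ui - 2 * phi2 * vi * ui - phi2 * vi * umin
  + k2 * beta2 phi2 umin xi vi vp.

(** Constraint set of QP_2(t) in the variables (u, e), all state
    quantities evaluated at time t; c1, c2 are the CLF coefficients at t.
    (The objective beta e^2 + 1/2 (u - u_ref)^2 plays no role in
    feasibility.) *)
Definition QP2_constraints (phi2 delta k2 umin umax : R)
    (xi vi xp vp up c1 c2 : R) (u e : R) : Prop :=
  0 <= bcbf2 phi2 delta k2 xi vi xp vp u /\
  umin <= u <= umax /\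
  0 <= eta2 phi2 k2 umin xi vi vp up u /\
  c1 + c2 * u <= e.

Definition QP2_feasible (phi2 delta k2 umin umax : R)
    (xi vi xp vp up c1 c2 : R) : Prop :=
  exists u e, QP2_constraints phi2 delta k2 umin umax xi vi xp vp up c1 c2 u e.

(** The control [u_min] is always admissible for QP_2 as long as [b_F >= 0] and
    [b_eta2 >= 0]: at [u_min] the CBF constraint reads [b_F >= 0], and since
    [u_{i-1} >= u_min], [v_i >= 0] and [u_min <= 0], the feasibility constraint
    reduces to [k_2 b_eta2 >= 0].  Conversely, any feasible applied control [u]
    keeps both functions nonnegative over the next sampling interval, because
    along the dynamics [d b_eta2/dt + k_2 b_eta2 = eta_2(u) >= 0] and
    [d b_F/dt + k_2 b_F = eta_2(u) + k_2 b_cbf2(u) >= 0], so (SA) applies. *)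

From Stdlib Require Import Reals Lra.
From Coquelicot Require Import Coquelicot.
Open Scope R_scope.

Lemma filterlim_Rplus {T} {F : (T -> Prop) -> Prop} {FF : Filter F}
    (f g : T -> R) (a b : R) :
  filterlim f F (locally a) -> filterlim g F (locally b) ->
  filterlim (fun h => f h + g h) F (locally (a + b)).
Proof.
  intros Hf Hg.
  exact (filterlim_comp_2 f g Rplus Hf Hg (@filterlim_plus R_AbsRing R_NormedModule a b)).
Qed.

Lemma filterlim_Rmult {T} {F : (T -> Prop) -> Prop} {FF : Filter F}
    (f g : T -> R) (a b : R) :
  filterlim f F (locally a) -> filterlim g F (locally b) ->
  filterlim (fun h => f h * g h) F (locally (a * b)).
Proof.
  intros Hf Hg.
  exact (filterlim_comp_2 f g Rmult Hf Hg (@filterlim_mult R_AbsRing a b)).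
Qed.

Lemma right_deriv_ext (f g : R -> R) (t d : R) :
  (forall s, f s = g s) -> right_deriv f t d -> right_deriv g t d.
Proof.
  intros Hfg Hf. unfold right_deriv in *.
  eapply filterlim_ext; [|exact Hf]. intros h. now rewrite !Hfg.
Qed.

Lemma right_deriv_const (c t : R) : right_deriv (fun _ => c) t 0.
Proof.
  unfold right_deriv.
  eapply filterlim_ext; [|apply filterlim_const].
  intros h. simpl. unfold Rdiv. ring.
Qed.

Lemma right_deriv_plus (f g : R -> R) (t a b : R) :
  right_deriv f t a -> right_deriv g t b ->
  right_deriv (fun s => f s + g s) t (a + b).
Proof.
  unfold right_deriv. intros Hf Hg.
  eapply filterlim_ext; [|exact (filterlim_Rplus _ _ _ _ Hf Hg)].
  intros h. simpl. unfold Rdiv. ring.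
Qed.

Lemma right_deriv_scal (c : R) (f : R -> R) (t a : R) :
  right_deriv f t a -> right_deriv (fun s => c * f s) t (c * a).
Proof.
  unfold right_deriv. intros Hf.
  eapply filterlim_ext; [|exact (filterlim_Rmult _ _ _ _ (filterlim_const c) Hf)].
  intros h. simpl. unfold Rdiv. ring.
Qed.

Lemma right_deriv_right_continuous (f : R -> R) (t a : R) :
  right_deriv f t a ->
  filterlim (fun h => f (t + h)) (at_right 0) (locally (f t)).
Proof.
  unfold right_deriv. intros Hf.
  assert (Hid : filterlim (fun h : R => h) (at_right 0) (locally 0))
    by apply (filter_le_within (F := locally 0)).
  assert (H := filterlim_Rplus _ _ _ _ (filterlim_const (f t))
                 (filterlim_Rmult _ _ _ _ Hid Hf)).
  rewrite Rmult_0_l, Rplus_0_r in H.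
  eapply filterlim_within_ext; [|exact H].
  intros h Hh. simpl. field. lra.
Qed.

Lemma right_deriv_mult (f g : R -> R) (t a b : R) :
  right_deriv f t a -> right_deriv g t b ->
  right_deriv (fun s => f s * g s) t (f t * b + g t * a).
Proof.
  intros Hf Hg.
  assert (Hfc := right_deriv_right_continuous _ _ _ Hf). unfold right_deriv in *.
  assert (H := filterlim_Rplus _ _ _ _ (filterlim_Rmult _ _ _ _ Hfc Hg)
                 (filterlim_Rmult _ _ _ _ (filterlim_const (g t)) Hf)).
  eapply filterlim_within_ext; [|exact H].
  intros h Hh. simpl. field. lra.
Qed.

Lemma bcbf2_umin (p delta k2 umin xi vi xp vp : R) :
  bcbf2 p delta k2 xi vi xp vp umin = bF p delta k2 umin xi vi xp vp.
Proof. unfold bcbf2, bF. ring. Qed.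

Lemma eta2_umin_ge0 (p k2 umin xi vi vp up : R) :
  0 <= p -> 0 <= k2 -> 0 <= vi -> umin <= 0 -> umin <= up ->
  0 <= beta2 p umin xi vi vp -> 0 <= eta2 p k2 umin xi vi vp up umin.
Proof.
  intros Hp Hk2 Hvi Humin Hup Hbeta.
  assert (Hbrake : 0 <= p * vi * - umin) by (apply Rmult_le_pos; [apply Rmult_le_pos|]; lra).
  assert (Hk2beta : 0 <= k2 * beta2 p umin xi vi vp) by (apply Rmult_le_pos; lra).
  unfold eta2. lra.
Qed.

Lemma QP2_feasible_umin (p delta k2 umin umax xi vi xp vp up c1 c2 : R) :
  0 <= p -> 0 <= k2 -> 0 <= vi -> umin <= 0 -> umin <= up -> umin <= umax ->
  0 <= bF p delta k2 umin xi vi xp vp -> 0 <= beta2 p umin xi vi vp ->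
  QP2_feasible p delta k2 umin umax xi vi xp vp up c1 c2.
Proof.
  intros Hp Hk2 Hvi Humin Hup Humax HbF Hbeta.
  exists umin, (c1 + c2 * umin). repeat split.
  - now rewrite bcbf2_umin.
  - lra.
  - exact Humax.
  - now apply eta2_umin_ge0.
  - lra.
Qed.

Section RightDerivativesAlongDynamics.

Variables (p delta k2 umin t ui upi : R) (x v xp vp : R -> R).
Hypotheses (Hx : right_deriv x t (v t)) (Hv : right_deriv v t ui)
  (Hxp : right_deriv xp t (vp t)) (Hvp : right_deriv vp t upi).

Lemma right_deriv_beta2 :
  right_deriv (fun s => beta2 p umin (x s) (v s) (vp s)) t
    (eta2 p k2 umin (x t) (v t) (vp t) upi ui - k2 * beta2 p umin (x t) (v t) (vp t)).
Proof.
  assert (H := right_deriv_plus _ _ _ _ _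
    (right_deriv_plus _ _ _ _ _
       (right_deriv_plus _ _ _ _ _ Hvp (right_deriv_scal (-1) _ _ _ Hv))
       (right_deriv_scal (- p) _ _ _ (right_deriv_mult _ _ _ _ _ Hv Hv)))
    (right_deriv_scal (- p * umin) _ _ _ Hx)).
  replace (eta2 _ _ _ _ _ _ _ _ - _) with
    (upi + -1 * ui + - p * (v t * ui + v t * ui) + - p * umin * v t)
    by (unfold eta2, beta2; ring).
  eapply right_deriv_ext; [|exact H].
  intros s. unfold beta2. simpl. ring.
Qed.

Lemma right_deriv_bF :
  right_deriv (fun s => bF p delta k2 umin (x s) (v s) (xp s) (vp s)) t
    (eta2 p k2 umin (x t) (v t) (vp t) upi ui
     + k2 * bcbf2 p delta k2 (x t) (v t) (xp t) (vp t) ui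
     - k2 * bF p delta k2 umin (x t) (v t) (xp t) (vp t)).
Proof.
  assert (Hb2 := right_deriv_plus _ _ _ _ _
    (right_deriv_plus _ _ _ _ _
       (right_deriv_plus _ _ _ _ _ Hxp (right_deriv_scal (-1) _ _ _ Hx))
       (right_deriv_scal (- p) _ _ _ (right_deriv_mult _ _ _ _ _ Hx Hv)))
    (right_deriv_const (- delta) t)).
  assert (H := right_deriv_plus _ _ _ _ _ right_deriv_beta2 (right_deriv_scal k2 _ _ _ Hb2)).
  replace (eta2 _ _ _ _ _ _ _ _ + _ - _) with
    (eta2 p k2 umin (x t) (v t) (vp t) upi ui - k2 * beta2 p umin (x t) (v t) (vp t)
     + k2 * (vp t + -1 * v t + - p * (x t * ui + v t * v t) + 0))
    by (unfold eta2, bcbf2, bF, beta2, b2; ring).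
  eapply right_deriv_ext; [|exact H].
  intros s. unfold bF, beta2, b2. simpl. ring.
Qed.

End RightDerivativesAlongDynamics.
Theorem theorem4
  (* constants *)
  (L phi delta k2 umin umax dt t0 tm : R)
  (* trajectories of CAV i (x, v, applied control u) and CAV i-1 (xp, vp, up),
     and the CLF coefficients c1, c2 of QP_2 *)
  (x v u xp vp up c1 c2 : R -> R)
  (HL : 0 < L) (Hphi : 0 < phi) (Hk2 : 0 < k2) (Hdt : 0 < dt)
  (* control bounds *)
  (Humin : umin < 0) (Humax : 0 < umax)
  (* CAV i enters at t0 (at the origin) and reaches the merging point L at tm *)
  (Hx0 : x t0 = 0) (Hxm : x tm = L)
  (HxL : forall t, t0 <= t <= tm -> 0 <= x t <= L)
  (* vehicle dynamics (right derivatives, controls piecewise constant) *)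
  (Hdx : forall t, t0 <= t < tm -> right_deriv x t (v t))
  (Hdv : forall t, t0 <= t < tm -> right_deriv v t (u t))
  (Hdxp : forall t, t0 <= t < tm -> right_deriv xp t (vp t))
  (Hdvp : forall t, t0 <= t < tm -> right_deriv vp t (up t))
  (* control held constant on each sampling interval *)
  (Hhold : forall (k : nat) s, t0 + INR k * dt <= s < t0 + INR k * dt + dt ->
             u s = u (t0 + INR k * dt))
  (* (A1) common minimum acceleration *)
  (HA1 : forall t, umin <= up t)
  (* (SA) sampling / forward invariance, for b in {b2, bF, beta2} *)
  (HSA_b2 : forall (k : nat), t0 + INR k * dt + dt <= tm ->
     forall d, right_deriv (fun s => b2 (phi / L) delta (x s) (v s) (xp s))
                 (t0 + INR k * dt) d ->
     0 <= b2 (phi / L) delta (x (t0 + INR k * dt)) (v (t0 + INR k * dt))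
             (xp (t0 + INR k * dt)) ->
     0 <= d + k2 * b2 (phi / L) delta (x (t0 + INR k * dt)) (v (t0 + INR k * dt))
             (xp (t0 + INR k * dt)) ->
     0 <= b2 (phi / L) delta (x (t0 + INR k * dt + dt)) (v (t0 + INR k * dt + dt))
             (xp (t0 + INR k * dt + dt)))
  (HSA_bF : forall (k : nat), t0 + INR k * dt + dt <= tm ->
     forall d, right_deriv (fun s => bF (phi / L) delta k2 umin (x s) (v s) (xp s) (vp s))
                 (t0 + INR k * dt) d ->
     0 <= bF (phi / L) delta k2 umin (x (t0 + INR k * dt)) (v (t0 + INR k * dt))
             (xp (t0 + INR k * dt)) (vp (t0 + INR k * dt)) ->
     0 <= d + k2 * bF (phi / L) delta k2 umin (x (t0 + INR k * dt)) (v (t0 + INR k * dt))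
             (xp (t0 + INR k * dt)) (vp (t0 + INR k * dt)) ->
     0 <= bF (phi / L) delta k2 umin (x (t0 + INR k * dt + dt)) (v (t0 + INR k * dt + dt))
             (xp (t0 + INR k * dt + dt)) (vp (t0 + INR k * dt + dt)))
  (HSA_beta : forall (k : nat), t0 + INR k * dt + dt <= tm ->
     forall d, right_deriv (fun s => beta2 (phi / L) umin (x s) (v s) (vp s))
                 (t0 + INR k * dt) d ->
     0 <= beta2 (phi / L) umin (x (t0 + INR k * dt)) (v (t0 + INR k * dt))
             (vp (t0 + INR k * dt)) ->
     0 <= d + k2 * beta2 (phi / L) umin (x (t0 + INR k * dt)) (v (t0 + INR k * dt))
             (vp (t0 + INR k * dt)) ->
     0 <= beta2 (phi / L) umin (x (t0 + INR k * dt + dt)) (v (t0 + INR k * dt + dt))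
             (vp (t0 + INR k * dt + dt)))
  (* (A4) initial conditions *)
  (HA4_b2 : 0 <= b2 (phi / L) delta (x t0) (v t0) (xp t0))
  (HA4_bF : 0 <= bF (phi / L) delta k2 umin (x t0) (v t0) (xp t0) (vp t0))
  (HA4_beta : 0 <= beta2 (phi / L) umin (x t0) (v t0) (vp t0))
  (* theorem hypotheses *)
  (Hv : forall t, t0 <= t <= tm -> 0 <= v t)
  (Humin0 : umin <= 0)
  (* applied control is a feasible point of QP_2(t) whenever QP_2(t) is feasible *)
  (Happly : forall (k : nat),
     let t := t0 + INR k * dt in
     QP2_feasible (phi / L) delta k2 umin umax
       (x t) (v t) (xp t) (vp t) (up t) (c1 t) (c2 t) ->
     exists e, QP2_constraints (phi / L) delta k2 umin umax
       (x t) (v t) (xp t) (vp t) (up t) (c1 t) (c2 t) (u t) e) :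
  forall (k : nat),
    (forall s, t0 + INR k * dt <= s <= t0 + INR k * dt + dt -> t0 <= s <= tm) ->
    let t := t0 + INR k * dt in
    QP2_feasible (phi / L) delta k2 umin umax
      (x t) (v t) (xp t) (vp t) (up t) (c1 t) (c2 t).
Proof.
  set (p2 := phi / L) in *.
  assert (Hp2 : 0 < p2) by (apply Rdiv_lt_0_compat; lra).
  assert (Hinv : forall k : nat, t0 + INR k * dt + dt <= tm ->
    let t := t0 + INR k * dt in
    0 <= bF p2 delta k2 umin (x t) (v t) (xp t) (vp t) /\
    0 <= beta2 p2 umin (x t) (v t) (vp t)).
  { induction k as [|k IH]; intros Hk t.
    - unfold t. simpl. rewrite Rmult_0_l, Rplus_0_r. now split.
    - rewrite S_INR in Hk. unfold t. rewrite S_INR.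
      assert (Hk' : t0 + INR k * dt + dt <= tm) by (pose proof (pos_INR k); nra).
      destruct (IH Hk') as [HbF Hbeta].
      set (tk := t0 + INR k * dt) in *.
      replace (t0 + (INR k + 1) * dt) with (tk + dt) by (unfold tk; ring).
      assert (Htk : t0 <= tk < tm) by (unfold tk; pose proof (pos_INR k); nra).
      assert (Hfeas : QP2_feasible p2 delta k2 umin umax
                        (x tk) (v tk) (xp tk) (vp tk) (up tk) (c1 tk) (c2 tk))
        by (apply QP2_feasible_umin; auto; try lra; apply Hv; lra).
      destruct (Happly k Hfeas) as [e (Hcbf & _ & Heta & _)]; fold tk in Hcbf, Heta.
      assert (Hk2cbf : 0 <= k2 * bcbf2 p2 delta k2 (x tk) (v tk) (xp tk) (vp tk) (u tk))
        by (apply Rmult_le_pos; lra).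
      split.
      + apply (HSA_bF k Hk' _ (right_deriv_bF _ _ _ _ _ _ _ _ _ _ _
                 (Hdx tk Htk) (Hdv tk Htk) (Hdxp tk Htk) (Hdvp tk Htk))); auto.
        fold tk p2. lra.
      + apply (HSA_beta k Hk' _ (right_deriv_beta2 p2 k2 umin _ _ _ _ _ _
                 (Hdx tk Htk) (Hdv tk Htk) (Hdvp tk Htk))); auto.
        fold tk p2. lra. }
  intros k Hk t.
  assert (Hnext : t0 <= t + dt <= tm) by (apply Hk; unfold t; lra).
  destruct (Hinv k ltac:(unfold t in Hnext; lra)) as [HbF Hbeta].
  apply QP2_feasible_umin; auto; try lra.
  apply Hv. unfold t in *. pose proof (pos_INR k). split; nra.
Qed.
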